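(* Fix $k\in\mathbb{N}$ and let $\alpha=\alpha(n)\in(0,\infty)$. If $\alpha\to\infty$ and $\alpha/\sqrt{n}\to 0$ as $n\to\infty$, then $d_{TV}(M_{n,k}^{\alpha},M_{n,k}^{\infty})\to 1$ as $n\to\infty$.
   Context: A $k$-out map on $[n]$ is a map $M:[n]\to[n]^k$, viewed as a digraph on $[n]$ in which each vertex has $k$ out-arcs labeled $1,\dots,k$; $\mathcal{M}_{n,k}$ denotes the set of all such maps. The in-degree $d_j$ of vertex $j$ is the total number of coordinates, over all vertices $i$ and all $k$ labels, of $M(i)$ equal to $j$ (so $d_1+\dots+d_n=kn$). For $\alpha\in(0,\infty)$, the random $k$-out map $M_{n,k}^{\alpha}$ is generated by inserting $kn$ out-arcs, $k$ per vertex: every vertex starts with weight $\alpha$; at each step a vertex whose out-degree is below $k$ picks its next image $j$ with probability proportional to the current weight of $j$, and the weight of $j$ then increases by $1$. Its law is $P(M_{n,k}^{\alpha}=M)=\prod_{j=1}^n \alpha^{\overline{d_j}}/(\alpha n)^{\overline{kn}}$, where $(d_1,\dots,d_n)$ is the in-degree sequence of $M$ and $x^{\overline{y}}=x(x+1)\cdots(x+y-1)$. $M_{n,k}^{\infty}$ denotes the uniformly random element of $\mathcal{M}_{n,k}$ (probability $n^{-kn}$ each). $d_{TV}(M_{n,k}^{\alpha},M_{n,k}^{\infty})=\sup_{\mathcal{A}\subseteq\mathcal{M}_{n,k}}|P(M_{n,k}^{\alpha}\in\mathcal{A})-P(M_{n,k}^{\infty}\in\mathcal{A})|$. *)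

From HB Require Import structures.
From mathcomp Require Import all_boot all_order all_algebra.
From mathcomp Require Import all_classical all_reals all_analysis.
Set Implicit Arguments. Unset Strict Implicit. Unset Printing Implicit Defensive.
Import Order.TTheory GRing.Theory Num.Theory numFieldNormedType.Exports.
Local Open Scope ring_scope.

Definition kout_map (n k : nat) := {ffun 'I_n -> k.-tuple 'I_n}.

Definition indeg (n k : nat) (M : kout_map n k) (j : 'I_n) : nat :=
  #|[set p : 'I_n * 'I_k | tnth (M p.1) p.2 == j]|.

Definition rfact (R : numDomainType) (x : R) (m : nat) : R :=
  \prod_(i < m) (x + i%:R).

Definition P_alpha (R : realType) (n k : nat) (alpha : R) (M : kout_map n k) : R :=
  (\prod_(j : 'I_n) rfact alpha (indeg M j)) / rfact (alpha * n%:R) (k * n).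

Definition P_unif (R : realType) (n k : nat) (M : kout_map n k) : R :=
  (n%:R ^+ (k * n))^-1.

(* total variation distance between two (point-mass) laws on a finite type:
   sup over all subsets A of |P(A) - Q(A)| (a max, as there are finitely many A) *)
Definition dTV (R : realType) (T : finType) (p q : T -> R) : R :=
  \big[Num.max/0]_(A : {set T}) `| \sum_(x in A) p x - \sum_(x in A) q x |.

From HB Require Import structures.
From mathcomp Require Import all_boot all_order all_algebra.
From mathcomp Require Import all_classical all_reals all_analysis.
From mathcomp Require Import ring lra.
Import Order.TTheory GRing.Theory Num.Theory numFieldNormedType.Exports.
Local Open Scope ring_scope.
Set Implicit Arguments. Unset Strict Implicit. Unset Printing Implicit Defensive.

(* Write b = 1/alpha.  Dividing numerator and denominator of the law of
   M^alpha by alpha^(kn) shows it is the law of a Polya-type urn in which the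
   kn arcs are thrown one at a time into the n vertices, an arc landing on j
   with probability (1 + b d_j) / (n + b (arcs so far)); b = 0 is the uniform
   law.  Adding one arc changes the power sums of the in-degrees by an amount
   that is linear in lower power sums, so the first two moments of the
   collision statistic S = sum_j d_j (d_j - 1) are computable exactly.  The
   means of S under the two laws differ by about k^2 n b, while both variances
   are O(n); if alpha = o(sqrt n) the gap dominates the spread, and
   thresholding S halfway gives, by Chebyshev, d_TV >= 1 - O(alpha^2 / n).
   The hypothesis alpha -> oo only serves to make b <= 1 eventually. *)

Definition arith_prod (R : pzRingType) (x d : R) (c : nat) : R :=
  \prod_(i < c) (x + d * i%:R).

Lemma arith_prodS (R : pzRingType) (x d : R) c :
  arith_prod x d c.+1 = arith_prod x d c * (x + d * c%:R).
Proof. by rewrite /arith_prod big_ord_recr. Qed.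

Section PolyaUrn.
Variables (R : realType) (X : finType) (n : nat) (y0 : 'I_n) (b : R).
Implicit Types (A : {set X}) (f g : {ffun X -> 'I_n}) (G : ('I_n -> nat) -> R).

Definition load A f (j : 'I_n) : nat := \sum_(x in A) (f x == j).

(* With [b = 1/alpha] this is the probability that inserting the balls of [A]
   one at a time, each going to a bin with probability proportional to
   [1 + b * (current load)], produces [f]; [b = 0] is the uniform law. *)
Definition polya_weight A f : R :=
  (\prod_j arith_prod 1 b (load A f j)) / arith_prod n%:R b #|A|.

(* Assignments of the balls of [A], encoded as functions on [X] equal to [y0]
   off [A]. *)
Definition pinned A :=
  [set f : {ffun X -> 'I_n} | [forall x, (x \notin A) ==> (f x == y0)]].

Definition polya_mean A G : R :=
  \sum_(f in pinned A) polya_weight A f * G (load A f).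

Definition incr (c : 'I_n -> nat) (j : 'I_n) : 'I_n -> nat :=
  fun j' => (c j' + (j' == j))%N.

Definition step_mean (a : nat) G (c : 'I_n -> nat) : R :=
  \sum_j (1 + b * (c j)%:R) / (n%:R + b * a%:R) * G (incr c j).

Definition ffun_set f x (j : 'I_n) : {ffun X -> 'I_n} :=
  [ffun y => if y == x then j else f y].

Lemma load_set A x f j : x \notin A ->
  load (x |: A) (ffun_set f x j) = incr (load A f) j.
Proof.
move=> xA; apply: funext => j'.
rewrite /load /incr big_setU1 //= addnC ffunE eqxx eq_sym; congr (_ + _)%N.
apply: eq_bigr => y yA; rewrite ffunE.
by case: (eqVneq y x) => [yx|//]; rewrite -yx yA in xA.
Qed.

Lemma polya_weight_set A x f j : x \notin A ->
  polya_weight (x |: A) (ffun_set f x j) =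
  polya_weight A f * ((1 + b * (load A f j)%:R) / (n%:R + b * #|A|%:R)).
Proof.
move=> xA; rewrite /polya_weight load_set // cardsU1 xA add1n arith_prodS.
rewrite (bigD1 j) //= [in RHS](bigD1 j) //= /incr eqxx addn1 arith_prodS.
rewrite (eq_bigr (fun j' => arith_prod 1 b (load A f j'))); last first.
  by move=> j' /negbTE nj; rewrite nj addn0.
rewrite invfM; ring.
Qed.

Lemma pinned_set A x f j : x \notin A ->
  (ffun_set f x j \in pinned (x |: A)) && (ffun_set (ffun_set f x j) x y0 == f)
  = (f \in pinned A).
Proof.
move=> xA; rewrite !inE; apply/idP/idP.
  case/andP=> /forallP pin /eqP <-; apply/forallP => y; apply/implyP => yA.
  rewrite !ffunE; case: (eqVneq y x) => [//|yx].
  have := implyP (pin y); rewrite !inE negb_or yx yA ffunE (negbTE yx).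
  exact.
move/forallP => pin; apply/andP; split.
  apply/forallP=> y; apply/implyP; rewrite !inE negb_or => /andP[yx yA].
  by rewrite ffunE (negbTE yx); exact: (implyP (pin y) yA).
apply/eqP/ffunP => y; rewrite !ffunE; case: (eqVneq y x) => [->|//].
exact/esym/eqP/(implyP (pin x) xA).
Qed.

Lemma polya_mean_setU1 A x G : x \notin A ->
  polya_mean (x |: A) G = polya_mean A (step_mean #|A| G).
Proof.
move=> xA; rewrite /polya_mean.
rewrite (partition_big (fun f : {ffun X -> 'I_n} => f x) xpredT) //=.
under [RHS]eq_bigr => g _ do rewrite /step_mean mulr_sumr.
rewrite exchange_big /=; apply: eq_bigr => j _.
rewrite (reindex_onto (fun g => ffun_set g x j) (fun f => ffun_set f x y0)); last first.
  move=> f /andP[_ /eqP fx]; apply/ffunP => y; rewrite !ffunE.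
  by case: eqP => [->|]; rewrite ?fx.
apply: eq_big => [g|g _]; last by rewrite polya_weight_set // load_set // -mulrA.
have -> : ffun_set g x j x == j by rewrite ffunE eqxx.
by rewrite andbT pinned_set.
Qed.

Lemma sum_load A f : (\sum_j load A f j)%N = #|A|.
Proof.
rewrite /load exchange_big /= -sum1_card; apply: eq_bigr => y _.
by rewrite (bigD1 (f y)) //= eqxx big1 // => j /negbTE; rewrite eq_sym => ->.
Qed.

Lemma eq_polya_mean A G1 G2 :
  (forall c, (\sum_j c j)%N = #|A| -> G1 c = G2 c) ->
  polya_mean A G1 = polya_mean A G2.
Proof. by move=> eqG; apply: eq_bigr => f _; rewrite eqG // sum_load. Qed.

Lemma polya_meanD A G1 G2 :
  polya_mean A (fun c => G1 c + G2 c) = polya_mean A G1 + polya_mean A G2.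
Proof. by rewrite /polya_mean -big_split; apply: eq_bigr => f _; rewrite mulrDr. Qed.

Lemma polya_meanZ A u G :
  polya_mean A (fun c => u * G c) = u * polya_mean A G.
Proof. by rewrite /polya_mean mulr_sumr; apply: eq_bigr => f _; rewrite mulrCA. Qed.

Lemma polya_mean_set0 G : polya_mean finset.set0 G = G (fun=> 0%N).
Proof.
rewrite /polya_mean; have -> : pinned finset.set0 = [set [ffun=> y0]].
  apply/setP => f; rewrite !inE; apply/forallP/eqP => [pin|->].
    by apply/ffunP => x; rewrite ffunE; apply/eqP; have := pin x; rewrite inE.
  by move=> x; rewrite ffunE eqxx implybT.
rewrite big_set1 /polya_weight cards0 /arith_prod big_ord0 invr1 mulr1.
have -> : load finset.set0 [ffun=> y0] = fun=> 0%N.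
  by apply: funext => j; rewrite /load big_set0.
by rewrite big1 ?mul1r // => j _; rewrite big_ord0.
Qed.

Lemma polya_mean_setT G :
  polya_mean [set: X] G = \sum_f polya_weight [set: X] f * G (load [set: X] f).
Proof. by apply: eq_bigl => f; rewrite inE; apply/forallP => x; rewrite inE. Qed.

Hypothesis b_ge0 : 0 <= b.

Lemma polya_denom_gt0 (t : R) : 0 <= t -> 0 < n%:R + b * t.
Proof.
move=> t_ge0; apply: ltr_wpDr; first exact: mulr_ge0.
by rewrite ltr0n; case: (n) y0 => [[]|].
Qed.

Lemma polya_weight_ge0 A f : 0 <= polya_weight A f.
Proof.
rewrite /polya_weight divr_ge0 //.
  apply: prodr_ge0 => j _; apply: prodr_ge0 => i _.
  by apply: addr_ge0 => //; apply: mulr_ge0.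
by apply: ltW; apply: prodr_gt0 => i _; apply: polya_denom_gt0.
Qed.

End PolyaUrn.

Section Collisions.
Variables (R : realType) (n : nat).
Implicit Types (c : 'I_n -> nat).

Definition coll c : R := \sum_j (c j)%:R * ((c j)%:R - 1).
Definition trip c : R := \sum_j (c j)%:R * ((c j)%:R - 1) * ((c j)%:R - 2).
Definition psum c (k : nat) : R := \sum_j (c j)%:R ^+ k.

Lemma sum_cubic c (u v w z : R) :
  \sum_j (u + v * (c j)%:R + w * (c j)%:R ^+ 2 + z * (c j)%:R ^+ 3) =
  u * n%:R + v * psum c 1 + w * psum c 2 + z * psum c 3.
Proof.
rewrite !big_split /= sumr_const card_ord -!mulr_sumr mulr_natr /psum.
by under [in RHS]eq_bigr do rewrite expr1.
Qed.

Lemma coll_psum c : coll c = psum c 2 - psum c 1.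
Proof. by rewrite /coll /psum -sumrB; apply: eq_bigr => j _; ring. Qed.

Lemma trip_psum c : trip c = psum c 3 - 3 * psum c 2 + 2 * psum c 1.
Proof.
by rewrite /trip /psum !mulr_sumr -sumrB -big_split /=; apply: eq_bigr => j _; ring.
Qed.

Lemma psum1 c : psum c 1 = (\sum_j c j)%N%:R.
Proof. by rewrite /psum natr_sum; apply: eq_bigr => j _; rewrite expr1. Qed.

Lemma sum_incr c j (h : nat -> R) :
  \sum_j' h (incr c j j') = \sum_j' h (c j') + (h (c j).+1 - h (c j)).
Proof.
rewrite (bigD1 j) //= [in RHS](bigD1 j) //= /incr eqxx addn1.
by under eq_bigr => j' /negbTE -> do rewrite addn0; ring.
Qed.

Lemma coll_incr c j : coll (incr c j) = coll c + 2 * (c j)%:R.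
Proof.
rewrite /coll (sum_incr c j (fun x => x%:R * (x%:R - 1))) -natr1.
by congr (_ + _); ring.
Qed.

Lemma trip_incr c j : trip (incr c j) = trip c + 3 * ((c j)%:R * ((c j)%:R - 1)).
Proof.
rewrite /trip (sum_incr c j (fun x => x%:R * (x%:R - 1) * (x%:R - 2))) -natr1.
by congr (_ + _); ring.
Qed.

End Collisions.
Arguments coll {R n} c.
Arguments trip {R n} c.

Section StepMoments.
Variables (R : realType) (n : nat) (b : R) (a : nat) (c : 'I_n -> nat).
Hypothesis sum_c : (\sum_j c j)%N = a.
Let D := n%:R + b * a%:R.
Hypothesis D_neq0 : D != 0.
Let x j : R := (c j)%:R.

Lemma step_mean_one : step_mean b a (fun=> 1) c = 1.
Proof.
rewrite /step_mean (eq_bigr (fun j =>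
    D^-1 * (1 + b * x j + 0 * x j ^+ 2 + 0 * x j ^+ 3))).
  by rewrite -mulr_sumr sum_cubic psum1 sum_c /D; field.
by move=> j _; rewrite /x; ring.
Qed.

Lemma step_mean_coll :
  step_mean b a (@coll R n) c =
  (1 + 2 * b / D) * coll c + 2 * (a%:R + b * a%:R) / D.
Proof.
rewrite /step_mean (eq_bigr (fun j =>
    D^-1 * (coll c + (b * coll c + 2) * x j + 2 * b * x j ^+ 2 + 0 * x j ^+ 3))).
  by rewrite -mulr_sumr sum_cubic !coll_psum psum1 sum_c /D; field.
by move=> j _; rewrite coll_incr /x; ring.
Qed.

Lemma step_mean_trip : step_mean b a (@trip R n) c =
  (1 + 3 * b / D) * trip c + 3 * (1 + 2 * b) / D * coll c.
Proof.
rewrite /step_mean (eq_bigr (fun j => D^-1 * (trip c + (b * trip c - 3) * x j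
    + (3 - 3 * b) * x j ^+ 2 + 3 * b * x j ^+ 3))).
  by rewrite -mulr_sumr sum_cubic trip_psum !coll_psum psum1 sum_c /D; field.
by move=> j _; rewrite trip_incr /x; ring.
Qed.

Lemma step_mean_coll_sq : step_mean b a (fun c => coll c ^+ 2) c =
  (1 + 4 * b / D) * coll c ^+ 2 + 4 * (a%:R + b * a%:R) / D * coll c
  + 4 * (coll c + a%:R + b * (trip c + 3 * coll c + a%:R)) / D.
Proof.
rewrite /step_mean (eq_bigr (fun j => D^-1 * (coll c ^+ 2
    + (b * coll c ^+ 2 + 4 * coll c) * x j + (4 * b * coll c + 4) * x j ^+ 2
    + 4 * b * x j ^+ 3))).
  by rewrite -mulr_sumr sum_cubic trip_psum !coll_psum psum1 sum_c /D; field.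
by move=> j _; rewrite coll_incr /x; ring.
Qed.

End StepMoments.

Section ClosedForms.
Variables (R : realType) (n : nat) (b : R).
Local Notation N := (n%:R : R).

(* Probabilities that two given balls share a bin, that three do, and that two
   disjoint pairs each share a bin. *)
Definition pair_prob : R := (1 + b) / (N + b).
Definition triple_prob : R := (1 + b) * (1 + 2 * b) / ((N + b) * (N + 2 * b)).
Definition two_pairs_prob : R :=
  ((1 + b) * (1 + 2 * b) * (1 + 3 * b) + (N - 1) * (1 + b) ^+ 2)
  / ((N + b) * (N + 2 * b) * (N + 3 * b)).

Definition coll_mean (a : R) := a * (a - 1) * pair_prob.
Definition trip_mean (a : R) := a * (a - 1) * (a - 2) * triple_prob.
Definition coll_sq_mean (a : R) := 2 * a * (a - 1) * pair_prob
  + 4 * a * (a - 1) * (a - 2) * triple_prob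
  + a * (a - 1) * (a - 2) * (a - 3) * two_pairs_prob.

End ClosedForms.

Section PolyaStepMoments.
Variables (R : realType) (X : finType) (n : nat) (y0 : 'I_n) (b : R).
Hypothesis b_ge0 : 0 <= b.
Local Notation N := (n%:R : R).
Variables (A : {set X}) (x : X).
Hypothesis xA : x \notin A.
Local Notation a := (#|A|%:R : R).
Local Notation D := (N + b * a).
Local Notation E := (polya_mean y0 b A).

Lemma polya_mean_one_setU1 : polya_mean y0 b (x |: A) (fun=> 1) = E (fun=> 1).
Proof.
rewrite polya_mean_setU1 //; apply: eq_polya_mean => c sc.
by rewrite step_mean_one // gt_eqF // (polya_denom_gt0 y0).
Qed.

Lemma polya_mean_coll_setU1 : polya_mean y0 b (x |: A) coll =
  (1 + 2 * b / D) * E coll + 2 * (a + b * a) / D * E (fun=> 1).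
Proof.
rewrite polya_mean_setU1 // -!polya_meanZ -polya_meanD.
apply: eq_polya_mean => c sc.
by rewrite step_mean_coll ?mulr1 // gt_eqF // (polya_denom_gt0 y0).
Qed.

Lemma polya_mean_trip_setU1 : polya_mean y0 b (x |: A) trip =
  (1 + 3 * b / D) * E trip + 3 * (1 + 2 * b) / D * E coll.
Proof.
rewrite polya_mean_setU1 // -!polya_meanZ -polya_meanD.
apply: eq_polya_mean => c sc.
by rewrite step_mean_trip // gt_eqF // (polya_denom_gt0 y0).
Qed.

Lemma polya_mean_coll_sq_setU1 :
  polya_mean y0 b (x |: A) (fun c => coll c ^+ 2) =
  (1 + 4 * b / D) * E (fun c => coll c ^+ 2)
  + (4 * (a + b * a) / D + 4 * (1 + 3 * b) / D) * E coll
  + 4 * b / D * E trip + 4 * (a + b * a) / D * E (fun=> 1).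
Proof.
rewrite polya_mean_setU1 // -!polya_meanZ -!polya_meanD.
apply: eq_polya_mean => c sc.
rewrite step_mean_coll_sq ?gt_eqF ?(polya_denom_gt0 y0) //; ring.
Qed.
End PolyaStepMoments.

Section PolyaMoments.
Variables (R : realType) (X : finType) (n : nat) (y0 : 'I_n) (b : R).
Hypothesis b_ge0 : 0 <= b.
Local Notation E := (polya_mean y0 b).

Lemma polya_moments (A : {set X}) :
  [/\ E A (fun=> 1) = 1, E A coll = coll_mean n b #|A|%:R,
      E A trip = trip_mean n b #|A|%:R &
      E A (fun c => coll c ^+ 2) = coll_sq_mean n b #|A|%:R].
Proof.
have N_gt0 : 0 < n%:R :> R.
  by have := polya_denom_gt0 y0 b_ge0 (lexx 0); rewrite mulr0 addr0.
have [D1 D2 D3] : [/\ n%:R + b != 0, n%:R + 2 * b != 0 & n%:R + 3 * b != 0].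
  by have := b_ge0; split; rewrite gt_eqF //; lra.
move cardA: #|A| => a; elim: a A cardA => [|a IH] A cardA.
  rewrite (cards0_eq cardA) !polya_mean_set0 /coll /trip.
  rewrite !big1 => [|j _|j _]; rewrite ?mul0r //.
  by rewrite /coll_mean /trip_mean /coll_sq_mean; split; ring.
have [x xA] : exists x, x \in A by apply/card_gt0P; rewrite cardA.
have cardAx : #|A :\ x| = a by move: cardA; rewrite (cardsD1 x) xA add1n => -[].
have xAx : x \notin A :\ x by rewrite finset.setD11.
have [E1 Ecoll Etrip Ecoll2] := IH _ cardAx.
have Da_neq0 : n%:R + b * a%:R != 0 by rewrite gt_eqF // (polya_denom_gt0 y0).
rewrite -(finset.setD1K xA) polya_mean_one_setU1 // polya_mean_coll_setU1 //.
rewrite polya_mean_trip_setU1 // polya_mean_coll_sq_setU1 //.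
rewrite cardAx E1 Ecoll Etrip Ecoll2 -natr1.
rewrite /coll_mean /trip_mean /coll_sq_mean /pair_prob /triple_prob /two_pairs_prob.
by split=> //; field; rewrite Da_neq0 D1 ?D2 ?D3.
Qed.

Lemma polya_weight_sum1 :
  \sum_(f : {ffun X -> 'I_n}) polya_weight b [set: X] f = 1.
Proof.
have [<- _ _ _] := polya_moments [set: X].
by rewrite polya_mean_setT; apply: eq_bigr => f _; rewrite mulr1.
Qed.

Lemma polya_coll_var : let m := coll_mean n b #|X|%:R in
  \sum_(f : {ffun X -> 'I_n})
     polya_weight b [set: X] f * (coll (load [set: X] f) - m) ^+ 2 =
  coll_sq_mean n b #|X|%:R - m ^+ 2.
Proof.
move=> m; have [E1 Ecoll _ Ecoll2] := polya_moments [set: X].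
rewrite cardsT in E1 Ecoll Ecoll2.
have -> : \sum_(f : {ffun X -> 'I_n})
      polya_weight b [set: X] f * (coll (load [set: X] f) - m) ^+ 2 =
    E [set: X] (fun c => coll c ^+ 2 + (- 2 * m) * coll c + m ^+ 2 * 1).
  by rewrite polya_mean_setT; apply: eq_bigr => f _; congr (_ * _); ring.
by rewrite !polya_meanD !polya_meanZ E1 Ecoll Ecoll2 /m; ring.
Qed.

End PolyaMoments.

Lemma ler_pdiv_cross (R : realFieldType) (x y w z : R) :
  0 < y -> 0 < z -> x * z <= w * y -> x / y <= w / z.
Proof. by move=> y_gt0 z_gt0 xzwy; rewrite ler_pdivrMr // mulrAC ler_pdivlMr. Qed.

Section MomentBounds.
Variables (R : realType) (n : nat) (b : R).
Local Notation N := (n%:R : R).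

Lemma pair_prob_bounds : 1 <= N -> 0 <= b <= 1 -> 0 <= pair_prob n b <= 2 / N.
Proof.
move=> N1 /andP[b0 b1]; apply/andP; split; first by rewrite divr_ge0 //; lra.
by rewrite ler_pdiv_cross //; try lra; nra.
Qed.

Lemma triple_prob_bounds : 1 <= N -> 0 <= b <= 1 ->
  0 <= triple_prob n b <= 6 / N ^+ 2.
Proof.
move=> N1 /andP[b0 b1]; apply/andP; split; first by rewrite divr_ge0 //; nra.
have N_gt0 : 0 < N by lra.
have den_gt0 : 0 < (N + b) * (N + 2 * b) by nra.
rewrite ler_pdiv_cross ?exprn_gt0 //.
have num : (1 + b) * (1 + 2 * b) <= 6 by nra.
have den : N ^+ 2 <= (N + b) * (N + 2 * b) by rewrite expr2; nra.
have := ler_pM (mulr_ge0 _ _) (sqr_ge0 N) num den; rewrite mulrC; apply; lra.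
Qed.

Lemma two_pairs_prob_ge0 : 1 <= N -> 0 <= b -> 0 <= two_pairs_prob n b.
Proof. by move=> N1 b0; rewrite divr_ge0 //; nra. Qed.

Lemma two_pairs_prob_sub_sqr : 1 <= N -> 0 <= b ->
  two_pairs_prob n b - pair_prob n b ^+ 2 =
  2 * b ^+ 2 * (N - 1) * (1 + b) / ((N + b) ^+ 2 * (N + 2 * b) * (N + 3 * b)).
Proof.
move=> N1 b0; rewrite /two_pairs_prob /pair_prob; field.
by rewrite !gt_eqF //; lra.
Qed.

Lemma two_pairs_prob_sub_sqr_bounds : 1 <= N -> 0 <= b <= 1 ->
  0 <= two_pairs_prob n b - pair_prob n b ^+ 2 <= 4 / N ^+ 3.
Proof.
move=> N1 /andP[b0 b1]; rewrite two_pairs_prob_sub_sqr //.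
have num_ge0 : 0 <= 2 * b ^+ 2 * (N - 1) * (1 + b).
  by rewrite !mulr_ge0 ?sqr_ge0 //; lra.
have den_gt0 : 0 < (N + b) ^+ 2 * (N + 2 * b) * (N + 3 * b).
  by rewrite !mulr_gt0 ?exprn_gt0 //; lra.
apply/andP; split; first exact: divr_ge0 (ltW den_gt0).
have den : N ^+ 4 <= (N + b) ^+ 2 * (N + 2 * b) * (N + 3 * b).
  have e1 : N ^+ 2 <= (N + b) ^+ 2 by rewrite !expr2; nra.
  have e2 : N ^+ 2 <= (N + 2 * b) * (N + 3 * b) by rewrite expr2; nra.
  by have := ler_pM (sqr_ge0 N) (sqr_ge0 N) e1 e2; rewrite -exprD mulrA.
have num : 2 * b ^+ 2 * (N - 1) * (1 + b) <= 4 * N.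
  have : b ^+ 2 * (1 + b) <= 2 by rewrite expr2; nra.
  by rewrite -mulrA mulrAC -mulrA; nra.
have N_gt0 : 0 < N by lra.
rewrite ler_pdiv_cross ?exprn_gt0 //.
have := ler_pM num_ge0 (exprn_ge0 3 (ltW N_gt0)) num (lexx (N ^+ 3)).
have -> : 4 * N * N ^+ 3 = 4 * N ^+ 4 by rewrite (exprS _ 3) mulrA.
nra.
Qed.

Lemma coll_var_le (a : R) : 1 <= N -> 0 <= b <= 1 -> 2 <= a ->
  coll_sq_mean n b a - coll_mean n b a ^+ 2 <=
  4 * a ^+ 2 / N + 24 * a ^+ 3 / N ^+ 2 + 4 * a ^+ 4 / N ^+ 3.
Proof.
move=> N1 b01 a2.
have /andP[p2_ge0 p2_le] := pair_prob_bounds N1 b01.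
have /andP[p3_ge0 p3_le] := triple_prob_bounds N1 b01.
have /andP[dp_ge0 dp_le] := two_pairs_prob_sub_sqr_bounds N1 b01.
have p22_ge0 := two_pairs_prob_ge0 N1 (proj1 (andP b01)).
have f2_ge0 : 0 <= a * (a - 1) by nra.
have f2_le : a * (a - 1) <= a ^+ 2 by rewrite expr2; nra.
have f3_ge0 : 0 <= a * (a - 1) * (a - 2) by apply: mulr_ge0; lra.
have f3_le : a * (a - 1) * (a - 2) <= a ^+ 3.
  by rewrite exprS mulrC; apply: ler_pM; lra.
have f22_le : (a * (a - 1)) ^+ 2 <= a ^+ 4.
  by rewrite (_ : 4 = 2 * 2)%N // exprM; apply: ler_pM.
(* By a(a-1)(a-2)(a-3) = (a(a-1))^2 - a(a-1)(4a-6), the two-pairs term almost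
   cancels the squared mean. *)
have -> : coll_sq_mean n b a - coll_mean n b a ^+ 2 =
  2 * (a * (a - 1) * pair_prob n b)
  + 4 * (a * (a - 1) * (a - 2) * triple_prob n b)
  - a * (a - 1) * (4 * a - 6) * two_pairs_prob n b
  + (a * (a - 1)) ^+ 2 * (two_pairs_prob n b - pair_prob n b ^+ 2).
  by rewrite /coll_sq_mean /coll_mean; ring.
have := ler_pM f2_ge0 p2_ge0 f2_le p2_le.
have := ler_pM f3_ge0 p3_ge0 f3_le p3_le.
have := ler_pM (sqr_ge0 _) dp_ge0 f22_le dp_le.
have : 0 <= a * (a - 1) * (4 * a - 6) * two_pairs_prob n b.
  by apply: mulr_ge0 => //; apply: mulr_ge0; lra.
rewrite !mulrA; lra.
Qed.

Lemma coll_mean_gap (a : R) : 1 <= N -> 0 <= b ->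
  coll_mean n b a - coll_mean n 0 a = a * (a - 1) * b * (N - 1) / (N * (N + b)).
Proof.
by move=> N1 b0; rewrite /coll_mean /pair_prob; field; rewrite !gt_eqF //; lra.
Qed.

Lemma coll_mean_gap_ge (a : R) : 2 <= N -> N <= a -> 0 <= b <= 1 ->
  N * b / 8 <= coll_mean n b a - coll_mean n 0 a.
Proof.
move=> N2 Na /andP[b0 b1]; rewrite coll_mean_gap //; last lra.
have den_gt0 : 0 < N * (N + b) by nra.
rewrite ler_pdiv_cross //.
have fa : N * (N - 1) <= a * (a - 1) by nra.
have fN : N * (N + b) <= 8 * (N - 1) ^+ 2 by rewrite expr2; nra.
have Nb_ge0 : 0 <= N * b by apply: mulr_ge0; lra.
have bN_ge0 : 0 <= b * (N - 1) by apply: mulr_ge0; lra.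
have := ler_wpM2l Nb_ge0 fN; have := ler_wpM2r bN_ge0 fa.
have -> : N * b * (8 * (N - 1) ^+ 2) = 8 * (N * (N - 1) * (b * (N - 1))).
  by rewrite expr2; ring.
have -> : a * (a - 1) * b * (N - 1) * 8 = 8 * (a * (a - 1) * (b * (N - 1))) by ring.
lra.
Qed.

End MomentBounds.

Section SecondMoment.
Variables (R : realType) (T : finType).
Implicit Types (p q w s : T -> R).

Lemma ler_sum_subset w (P Q : pred T) : (forall x, 0 <= w x) ->
  (forall x, P x -> Q x) -> \sum_(x | P x) w x <= \sum_(x | Q x) w x.
Proof.
move=> w_ge0 PQ; rewrite [X in X <= _]big_mkcond [X in _ <= X]big_mkcond /=.
by apply: ler_sum => x _; case: ifPn => [/PQ ->|_] //; case: ifP.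
Qed.

Lemma chebyshev_fin w s (m d : R) : (forall x, 0 <= w x) -> 0 < d ->
  \sum_(x | d <= `|s x - m|) w x <= (\sum_x w x * (s x - m) ^+ 2) / d ^+ 2.
Proof.
move=> w_ge0 d_gt0; have d_ge0 := ltW d_gt0.
rewrite ler_pdivlMr ?exprn_gt0 // mulr_suml.
rewrite [X in _ <= X](bigID (fun x => d <= `|s x - m|)) /= -[X in X <= _]addr0.
apply: lerD; last by apply: sumr_ge0 => x _; rewrite mulr_ge0 ?sqr_ge0.
apply: ler_sum => x dev; rewrite ler_wpM2l //.
by rewrite -[(s x - m) ^+ 2]real_normK ?num_real // !expr2 ler_pM.
Qed.

Lemma dTV_ge_event p q (A : {set T}) :
  `|\sum_(x in A) p x - \sum_(x in A) q x| <= dTV p q.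
Proof. exact: le_bigmax. Qed.

Lemma dTV_le1 p q : (forall x, 0 <= p x) -> (forall x, 0 <= q x) ->
  \sum_x p x = 1 -> \sum_x q x = 1 -> dTV p q <= 1.
Proof.
move=> p_ge0 q_ge0 p1 q1; apply: bigmax_le => // A _.
have mass_le1 (r : T -> R) : (forall x, 0 <= r x) -> \sum_x r x = 1 ->
    0 <= \sum_(x in A) r x <= 1.
  move=> r_ge0 r1; rewrite sumr_ge0 //= -r1 [X in _ <= X](bigID (mem A)) /=.
  by rewrite lerDl sumr_ge0.
have /andP[? ?] := mass_le1 p p_ge0 p1; have /andP[? ?] := mass_le1 q q_ge0 q1.
rewrite ler_norml; apply/andP; split; lra.
Qed.

(* Second moment method: when the means of [s] under [p] and [q] are [2 d]
   apart, thresholding [s] halfway distinguishes the two laws. *)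
Lemma dTV_ge_mean_gap p q s (mp mq d : R) :
  (forall x, 0 <= p x) -> (forall x, 0 <= q x) -> \sum_x p x = 1 ->
  0 < d -> mp - mq = 2 * d ->
  1 - (\sum_x p x * (s x - mp) ^+ 2 + \sum_x q x * (s x - mq) ^+ 2) / d ^+ 2
  <= dTV p q.
Proof.
move=> p_ge0 q_ge0 p1 d_gt0 gap.
pose A := [set x | mq + d <= s x].
have pAc : \sum_(x | x \notin A) p x <= (\sum_x p x * (s x - mp) ^+ 2) / d ^+ 2.
  apply: le_trans (chebyshev_fin _ _ p_ge0 d_gt0); apply: ler_sum_subset => // x.
  by rewrite inE -ltNge => dev; rewrite distrC ger0_norm; lra.
have qA : \sum_(x in A) q x <= (\sum_x q x * (s x - mq) ^+ 2) / d ^+ 2.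
  apply: le_trans (chebyshev_fin _ _ q_ge0 d_gt0); apply: ler_sum_subset => // x.
  by rewrite inE => dev; rewrite ger0_norm; lra.
have pA : \sum_x p x = \sum_(x in A) p x + \sum_(x | x \notin A) p x.
  exact: bigID.
apply: le_trans (dTV_ge_event p q A); apply: le_trans (ler_norm _).
by rewrite mulrDl; lra.
Qed.

End SecondMoment.

Lemma rfactM (R : realType) (a x : R) m :
  a != 0 -> rfact (a * x) m = a ^+ m * arith_prod x a^-1 m.
Proof.
move=> a_neq0; rewrite /rfact /arith_prod.
rewrite (eq_bigr (fun i : 'I_m => a * (x + a^-1 * i%:R))); last by move=> i _; field.
by rewrite big_split /= prodr_const card_ord.
Qed.

Section KoutMaps.
Variables (R : realType) (n k : nat).
Local Notation arcs := [set: 'I_n * 'I_k].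
Local Notation graph := {ffun 'I_n * 'I_k -> 'I_n}.

Definition kout_graph (M : kout_map n k) : graph := [ffun p => tnth (M p.1) p.2].

Definition graph_kout (g : graph) : kout_map n k :=
  [ffun i => [tuple g (i, l) | l < k]].

Lemma kout_graphK : cancel kout_graph graph_kout.
Proof.
move=> M; apply/ffunP => i; rewrite ffunE; apply: eq_from_tnth => l.
by rewrite tnth_mktuple ffunE.
Qed.

Lemma graph_koutK : cancel graph_kout kout_graph.
Proof. by move=> g; apply/ffunP => -[i l]; rewrite !ffunE tnth_mktuple. Qed.

Lemma sum_kout_graph (F : graph -> R) : \sum_M F (kout_graph M) = \sum_g F g.
Proof.
by rewrite [RHS](reindex kout_graph) //; exists graph_kout => g _;
  [exact: kout_graphK|exact: graph_koutK].
Qed.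

Lemma indeg_load (M : kout_map n k) : indeg M = load arcs (kout_graph M).
Proof.
apply: funext => j; rewrite /indeg /load -sum1_card big_mkcond [RHS]big_mkcond /=.
by apply: eq_bigr => p _; rewrite !inE ffunE; case: eqP.
Qed.

Definition kout_law (b : R) (M : kout_map n k) : R :=
  polya_weight b arcs (kout_graph M).

Lemma P_alpha_kout_law (a : R) : 0 < a -> @P_alpha R n k a = kout_law a^-1.
Proof.
move=> a_gt0; apply: funext => M; have a_neq0 : a != 0 by rewrite gt_eqF.
rewrite /P_alpha /kout_law /polya_weight rfactM //.
rewrite (eq_bigr (fun j => a ^+ indeg M j * arith_prod 1 a^-1 (indeg M j)));
  last by move=> j _; rewrite -rfactM // mulr1.
have sum_indeg : (\sum_j indeg M j)%N = (k * n)%N.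
  by rewrite indeg_load sum_load cardsT card_prod !card_ord mulnC.
rewrite big_split /= prodrXr sum_indeg indeg_load cardsT card_prod !card_ord mulnC.
by rewrite invfM mulrACA divff ?mul1r // expf_neq0.
Qed.

Lemma P_unif_kout_law : @P_unif R n k = kout_law 0.
Proof.
apply: funext => M; rewrite /P_unif /kout_law /polya_weight big1; last first.
  by move=> j _; rewrite /arith_prod big1 // => i _; rewrite mul0r addr0.
rewrite /arith_prod (eq_bigr (fun _ => n%:R)) => [|i _]; last by rewrite mul0r addr0.
by rewrite prodr_const card_ord cardsT card_prod !card_ord mulnC mul1r.
Qed.

Variable b : R.
Hypotheses (n_gt0 : (0 < n)%N) (b_ge0 : 0 <= b).
Let y0 : 'I_n := Ordinal n_gt0.

Lemma kout_law_ge0 M : 0 <= kout_law b M.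
Proof. exact: (polya_weight_ge0 y0). Qed.

Lemma kout_law_sum1 : \sum_M kout_law b M = 1.
Proof.
by rewrite (sum_kout_graph (polya_weight b arcs)) (polya_weight_sum1 _ y0 b_ge0).
Qed.

Lemma kout_law_coll_var : let m := coll_mean n b (k%:R * n%:R) in
  \sum_M kout_law b M * (coll (indeg M) - m) ^+ 2 =
  coll_sq_mean n b (k%:R * n%:R) - m ^+ 2.
Proof.
have -> : k%:R * n%:R = #|{: 'I_n * 'I_k}|%:R :> R.
  by rewrite card_prod !card_ord natrM mulrC.
rewrite /= -(polya_coll_var _ y0 b_ge0) /= -(sum_kout_graph (fun g =>
  polya_weight b arcs g * (coll (load arcs g) - _) ^+ 2)).
by apply: eq_bigr => M _; rewrite indeg_load.
Qed.

End KoutMaps.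

Lemma dTV_kout_law_ge (R : realType) (n k : nat) (a : R) :
  (2 <= n)%N -> (1 <= k)%N -> 1 <= a ->
  1 - 512 * (4 * k%:R ^+ 2 + 24 * k%:R ^+ 3 + 4 * k%:R ^+ 4) * a ^+ 2 / n%:R
  <= dTV (@kout_law R n k a^-1) (@kout_law R n k 0).
Proof.
move=> n2 k1 a1; set C := 4 * _ + _ + _.
have N2 : 2 <= n%:R :> R by rewrite (ler_nat R 2 n).
have K1 : 1 <= k%:R :> R by rewrite (ler_nat R 1 k).
have n_gt0 : (0 < n)%N by apply: leq_trans n2.
set N := n%:R in N2 *; set m := k%:R * N; set b := a^-1.
have b_gt0 : 0 < b by rewrite invr_gt0; lra.
have b01 : 0 <= b <= 1 by rewrite ltW //= invf_le1 //; lra.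
have var_le (c : R) : 0 <= c <= 1 ->
    coll_sq_mean n c m - coll_mean n c m ^+ 2 <= C * N.
  move=> c01.
  have -> : C * N = 4 * m ^+ 2 / N + 24 * m ^+ 3 / N ^+ 2 + 4 * m ^+ 4 / N ^+ 3.
    by rewrite /C /m; field; rewrite gt_eqF //; lra.
  by apply: coll_var_le => //; rewrite /m; nra.
have gap : N * b / 8 <= coll_mean n b m - coll_mean n 0 m.
  by apply: coll_mean_gap_ge => //; rewrite /m; nra.
set d := (coll_mean n b m - coll_mean n 0 m) / 2.
have d_ge : N * b / 16 <= d by rewrite /d; lra.
have Nb_gt0 : 0 < N * b / 16 by apply: divr_gt0 => //; apply: mulr_gt0 => //; lra.
have d_gt0 : 0 < d by lra.
have b_ge0 := ltW b_gt0.
apply: le_trans (dTV_ge_mean_gap (fun M => coll (indeg M))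
  (mp := coll_mean n b m) (mq := coll_mean n 0 m) (kout_law_ge0 n_gt0 b_ge0)
  (kout_law_ge0 n_gt0 (lexx 0)) (kout_law_sum1 k n_gt0 b_ge0) d_gt0 _); last first.
  by rewrite /d; lra.
rewrite !kout_law_coll_var //= -/m lerD2l lerN2.
have -> : 512 * C * a ^+ 2 / N = 2 * (C * N) / (N * b / 16) ^+ 2.
  by rewrite /b; field; rewrite !gt_eqF //; lra.
apply: le_trans (_ : 2 * (C * N) / d ^+ 2 <= _).
  have := var_le b b01; have := var_le 0; rewrite lexx ler01 => /(_ isT).
  by rewrite ler_pM2r ?invr_gt0 ?exprn_gt0 //; lra.
have C_gt0 : 0 < C by rewrite /C; nra.
rewrite ler_pM2l ?lef_pV2 ?posrE ?exprn_gt0 //; last nra.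
by rewrite !expr2 ler_pM //; lra.
Qed.

Local Open Scope classical_set_scope.
Lemma cvg_to_1_squeeze (R : realType) (u v : nat -> R) (c : R) :
  (\forall n \near \oo, 1 - c * v n ^+ 2 <= u n <= 1) ->
  v n @[n --> \oo] --> (0 : R) -> u n @[n --> \oo] --> (1 : R).
Proof.
move=> bounds v0; apply: (squeeze_cvgr bounds); last exact: cvg_cst.
rewrite -[X in _ --> X](subr0 1) -(mulr0 c) -[X in c * X](mulr0 0).
apply: cvgB; first exact: cvg_cst.
by under eq_fun do rewrite expr2; apply: cvgM; [exact: cvg_cst|exact: cvgM].
Qed.

Unset Implicit Arguments.

Theorem theorem1 (R : realType) (k : nat) (alpha : nat -> R) :
  (1 <= k)%N ->
  (forall n, 0 < alpha n) ->
  alpha n @[n --> \oo] --> +oo ->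
  alpha n / Num.sqrt (n%:R) @[n --> \oo] --> 0 ->
  @dTV R (kout_map n k) (@P_alpha R n k (alpha n)) (@P_unif R n k)
    @[n --> \oo] --> (1 : R).
Proof.
move=> k1 alpha_gt0 alpha_oo alpha_small.
apply: (cvg_to_1_squeeze
  (c := 512 * (4 * k%:R ^+ 2 + 24 * k%:R ^+ 3 + 4 * k%:R ^+ 4))) alpha_small.
near=> n.
have n2 : (2 <= n)%N by near: n; exact: nbhs_infty_ge.
have alpha1 : 1 <= alpha n by near: n; exact: (cvgryPge _).1 alpha_oo 1.
have n_gt0 : (0 < n)%N by apply: leq_trans n2.
have b_ge0 : 0 <= (alpha n)^-1 by rewrite invr_ge0 ltW.
rewrite P_alpha_kout_law // P_unif_kout_law; apply/andP; split.
  rewrite expr_div_n sqr_sqrtr // mulrA.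
  exact: dTV_kout_law_ge.
have zero_ge0 := lexx (0 : R).
apply: dTV_le1; [exact: kout_law_ge0 n_gt0 b_ge0|exact: kout_law_ge0 n_gt0 zero_ge0|
  apply: (kout_law_sum1 k n_gt0 b_ge0)|apply: (kout_law_sum1 k n_gt0 zero_ge0)].
Unshelve. all: by end_near.
Qed.
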